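(* Let $W,M$ be disjoint with $|W|=|M|=n$ and let $(w,m)\in W\times M$ be fixed. Both the nondeterministic and the co-nondeterministic two-party communication complexities of determining whether $(w,m)$ is married in some (respectively, every) stable marriage of $(W,M,\succ_W,\succ_M)$, where Alice holds the women's full preference profile $\succ_W$ and Bob holds the men's full preference profile $\succ_M$, are $\Omega(n^2)$.
   Context: A full preference profile of the women gives each woman a total order on $M$; that of the men gives each man a total order on $W$. A perfect marriage is a bijection between $W$ and $M$. A pair $(w,m)$ is blocking for $\mu$ if $w$ prefers $m$ to her spouse in $\mu$ and $m$ prefers $w$ to his spouse in $\mu$; $\mu$ is stable if it has no blocking pair. Nondeterministic communication complexity of a Boolean function is the minimum, over protocols with a guessed certificate, of the worst-case number of bits (including certificate) needed so that accepting computations exist exactly on $1$-inputs; co-nondeterministic complexity is the nondeterministic complexity of the negated function. Bounds are asymptotic in $n$. *)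

From mathcomp Require Import all_boot all_fingroup.
Set Implicit Arguments. Unset Strict Implicit. Unset Printing Implicit Defensive.

(* Women = 'I_n, men = 'I_n (two distinct copies, hence disjoint).
   A full preference profile of the women: for each woman w, a total order
   on the men, encoded by a rank permutation: (pW w) m = position of m in
   w's list (0 = most preferred). *)
Definition profile (n : nat) := {ffun 'I_n -> {perm 'I_n}}.

Definition prefers n (p : profile n) (a : 'I_n) (b1 b2 : 'I_n) : bool :=
  (p a b1 < p a b2)%N.

(* A perfect marriage is a bijection mu : W -> M (woman w marries mu w). *)
Definition marriage n := {perm 'I_n}.

Definition blocking n (pW pM : profile n) (mu : marriage n) (w m : 'I_n) : bool :=
  prefers pW w m (mu w) && prefers pM m w ((mu^-1)%g m).

Definition stable n (pW pM : profile n) (mu : marriage n) : bool :=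
  [forall w, forall m, ~~ blocking pW pM mu w m].

Definition married_some n (w m : 'I_n) (pW pM : profile n) : bool :=
  [exists mu : marriage n, stable pW pM mu && (mu w == m)].
Definition married_every n (w m : 'I_n) (pW pM : profile n) : bool :=
  [forall mu : marriage n, stable pW pM mu ==> (mu w == m)].

(* Deterministic two-party protocol trees: at an Alice node Alice sends one
   bit computed from her input (the node position encodes the history), at a
   Bob node Bob does; leaves carry the output. *)
Inductive proto (X Y : Type) : Type :=
| PLeaf of bool
| PAlice of (X -> bool) & proto X Y & proto X Y
| PBob of (Y -> bool) & proto X Y & proto X Y.

Fixpoint peval X Y (p : proto X Y) (x : X) (y : Y) : bool :=
  match p with
  | PLeaf b => b
  | PAlice f l r => if f x then peval l x y else peval r x y
  | PBob g l r => if g y then peval l x y else peval r x y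
  end.

Fixpoint pdepth X Y (p : proto X Y) : nat :=
  match p with
  | PLeaf _ => 0
  | PAlice _ l r => (maxn (pdepth l) (pdepth r)).+1
  | PBob _ l r => (maxn (pdepth l) (pdepth r)).+1
  end.

(* A nondeterministic protocol with k certificate bits: for every guessed
   certificate c (seen by both players) a deterministic protocol P c is run;
   the input is accepted iff some certificate leads to output true. *)
Definition nd_protocol_of_cost (X Y : finType) (f : X -> Y -> bool) (b : nat) : Prop :=
  exists (k d : nat) (P : k.-tuple bool -> proto X Y),
    (k + d <= b)%N /\ (forall c, (pdepth (P c) <= d)%N) /\
    (forall x y, f x y = [exists c, peval (P c) x y]).

(* "c * N(f) >= L" : every nondeterministic protocol for f has cost b with
   L <= c * b.  Co-nondeterministic complexity of f is N of the negation. *)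
Definition ncc_scaled_ge (X Y : finType) (f : X -> Y -> bool) (c L : nat) : Prop :=
  forall b, nd_protocol_of_cost f b -> (L <= c * b)%N.
Definition concc_scaled_ge (X Y : finType) (f : X -> Y -> bool) (c L : nat) : Prop :=
  ncc_scaled_ge (fun x y => ~~ f x y) c L.

From mathcomp Require Import all_boot all_fingroup.
From mathcomp Require Import zify.
Set Implicit Arguments. Unset Strict Implicit. Unset Printing Implicit Defensive.

(* Stable marriage hides a subset test.  For [n = p + q + 2] Alice turns a
   set [F] of cells of a [p x q] grid into the women's preferences and Bob
   turns the complement of a set [G] into the men's, so that in every stable
   marriage woman [0] is married to man [0] if [F \subset G] and to man [1]
   otherwise; stable marriages exist (Gale-Shapley), so "some" and "every"
   coincide here.  The pairs [(F, F)] form a fooling set of size [2 ^ (p q)]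
   for subset testing, hence even a nondeterministic protocol needs
   [p q >= n ^ 2 / 16] bits.  Relabelling women and men moves the
   distinguished pair onto any given [(w, m)], and asking about man [1]
   instead of man [0] negates the answer, which gives the co-nondeterministic
   bounds. *)

Section FoolingSets.
Variables (X Y I : finType) (xs : I -> X) (ys : I -> Y).

Definition fooling (e : X -> Y -> bool) (A : {set I}) : Prop :=
  {in A, forall i, e (xs i) (ys i)} /\
  {in A &, forall i j, i != j -> ~~ (e (xs i) (ys j) && e (xs j) (ys i))}.

Lemma fooling_restrict (e e' : X -> Y -> bool) (A B : {set I}) :
  B \subset A -> {in B &, forall i j, e (xs i) (ys j) = e' (xs i) (ys j)} ->
  fooling e A -> fooling e' B.
Proof.
move=> /subsetP sBA ee' [diag cross]; split=> [i Bi | i j Bi Bj ij].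
  by rewrite -ee' ?diag ?sBA.
by rewrite -!ee' ?cross ?sBA.
Qed.

Lemma card_fooling_const (b : bool) (A : {set I}) :
  fooling (fun _ _ => b) A -> #|A| <= 1.
Proof.
case: b => -[diag cross].
  apply/card_le1_eqP => i j Ai Aj; apply/eqP/negPn/negP => ij.
  by have := cross j i Aj Ai ij.
rewrite leqW // leqn0 cards_eq0; apply/eqP/setP => i; rewrite inE.
by apply/negP => /diag.
Qed.

(* A protocol node splits a fooling set according to the bit sent; on each
   half the node behaves like the corresponding subtree. *)
Lemma card_fooling_split (e el er : X -> Y -> bool) (s : I -> bool) dl dr
    (A : {set I}) :
  {in A &, forall i j, s i = s j ->
     e (xs i) (ys j) = (if s i then el else er) (xs i) (ys j)} ->
  (forall B, fooling el B -> #|B| <= 2 ^ dl) ->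
  (forall B, fooling er B -> #|B| <= 2 ^ dr) ->
  fooling e A -> #|A| <= 2 ^ (maxn dl dr).+1.
Proof.
move=> eE boundl boundr foolA.
rewrite -(cardsID [set i | s i] A) expnS mul2n -addnn.
apply: leq_add.
- apply: leq_trans (boundl _ _) _; last by rewrite leq_exp2l // leq_maxl.
  apply: fooling_restrict foolA; first exact: subsetIl.
  by move=> i j; rewrite !inE => /andP[Ai si] /andP[Aj sj]; rewrite eE ?si ?sj.
- apply: leq_trans (boundr _ _) _; last by rewrite leq_exp2l // leq_maxr.
  apply: fooling_restrict foolA; first exact: subsetDl.
  move=> i j; rewrite !inE => /andP[/negbTE si Ai] /andP[/negbTE sj Aj].
  by rewrite eE ?si ?sj.
Qed.

Lemma card_fooling_proto (p : proto X Y) (A : {set I}) :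
  fooling (peval p) A -> #|A| <= 2 ^ pdepth p.
Proof.
elim: p A => [b | f l IHl r IHr | g l IHl r IHr] A /=.
- exact: card_fooling_const.
- apply: (card_fooling_split (s := fun i => f (xs i)) _ (IHl) (IHr)).
  by move=> i j _ _ _ /=; case: (f (xs i)).
- apply: (card_fooling_split (s := fun i => g (ys i)) _ (IHl) (IHr)).
  by move=> i j _ _ -> /=; case: (g (ys j)).
Qed.

Lemma card_fooling_nd (f : X -> Y -> bool) b :
  fooling f [set: I] -> nd_protocol_of_cost f b -> #|I| <= 2 ^ b.
Proof.
move=> [diag cross] [k [d [P [cost [depth fE]]]]].
apply: leq_trans (_ : 2 ^ (k + d) <= 2 ^ b); last by rewrite leq_exp2l.
have acc_le c : #|[set i | peval (P c) (xs i) (ys i)]| <= 2 ^ d.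
  apply: leq_trans (_ : 2 ^ pdepth (P c) <= _); last by rewrite leq_exp2l.
  apply: card_fooling_proto; split=> [i | i j]; rewrite !inE // => _ _ ij.
  apply: contraNN (cross i j (in_setT i) (in_setT j) ij) => /andP[Pij Pji].
  by rewrite !fE; apply/andP; split; apply/existsP; exists c.
(* Every diagonal pair is accepted under some certificate, and each
   certificate accepts a fooling set. *)
rewrite -sum1_card.
apply: leq_trans (_ : \sum_i \sum_c (peval (P c) (xs i) (ys i) : nat) <= _).
  apply: leq_sum => i _.
  have /existsP[c acc_c] : [exists c, peval (P c) (xs i) (ys i)].
    by rewrite -fE diag ?in_setT.
  by rewrite (bigD1 c) //= acc_c.
rewrite exchange_big; apply: leq_trans (_ : \sum_(c : k.-tuple bool) 2 ^ d <= _).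
  apply: leq_sum => c _; apply: leq_trans (acc_le c).
  rewrite -sum1_card [X in _ <= X]big_mkcond; apply: leq_sum => i _.
  by rewrite inE; case: peval.
by rewrite sum_nat_const card_tuple card_bool expnD.
Qed.

End FoolingSets.

(* Subset testing: the diagonal is a fooling set of size 2 ^ #|I|. *)
Lemma nd_cost_subset (X Y I : finType) (f : X -> Y -> bool)
    (xs : {set I} -> X) (ys : {set I} -> Y) b :
  (forall F G, f (xs F) (ys G) = (F \subset G)) ->
  nd_protocol_of_cost f b -> #|I| <= b.
Proof.
move=> fE /(card_fooling_nd (xs := xs) (ys := ys)).
rewrite -cardsT -powersetT card_powerset cardsT leq_exp2l //; apply.
split=> [F _ | F G _ _ FG]; rewrite !fE //.
by apply: contraNN FG => sub2; rewrite eqEsubset.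
Qed.

(* Men propose (Gale-Shapley): [k y] is the position, in man [y]'s list, of
   the woman he currently proposes to.  The invariant says that every woman
   he has already given up on holds a proposal she prefers to his. *)
Section GaleShapley.
Variables (n : nat) (pW pM : profile n).

Definition proposee (k : 'I_n -> 'I_n) (y : 'I_n) : 'I_n := ((pM y)^-1)%g (k y).

Definition gs_invariant (k : 'I_n -> 'I_n) : Prop :=
  forall y x : 'I_n, pM y x < k y ->
    exists y', proposee k y' = x /\ prefers pW x y' y.

Lemma pM_proposee k y : pM y (proposee k y) = k y.
Proof. by rewrite permKV. Qed.

Lemma stable_of_injective_proposee k :
  gs_invariant k -> injective (proposee k) -> exists mu, stable pW pM mu.
Proof.
move=> inv k_inj; pose g := perm k_inj.
have gE z : g z = proposee k z by rewrite permE.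
exists (g^-1)%g; apply/forallP => x; apply/forallP => y; apply/negP.
rewrite /blocking invgK /prefers gE pM_proposee => /andP[x_prefers y_prefers].
have [y' [held_x held]] := inv y x y_prefers.
by move: x_prefers held; rewrite -held_x -gE permK /prefers; lia.
Qed.

Lemma proposal_not_last k y1 y2 : gs_invariant k -> y1 != y2 ->
  proposee k y1 = proposee k y2 -> (k y1).+1 < n.
Proof.
move=> inv y12 same; rewrite ltnNge; apply/negP => last_k.
have k_last : (k y1 : nat) = n.-1 by have := ltn_ord (k y1); lia.
have onto x : x \in [set proposee k y | y in [set~ y1]].
  case: (ltngtP (pM y1 x) (k y1)) => [lt_x | gt_x | /val_inj eq_x].
  - have [y' [<- held]] := inv y1 x lt_x; apply: imset_f; rewrite !inE.
    by apply: contraTneq held => ->; rewrite /prefers ltnn.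
  - by have := ltn_ord (pM y1 x); lia.
  - have -> : x = proposee k y2 by rewrite -same /proposee -eq_x permK.
    by apply: imset_f; rewrite !inE eq_sym.
have : #|[set: 'I_n]| <= #|[set proposee k y | y in [set~ y1]]|.
  by apply/subset_leq_card/subsetP => x _; apply: onto.
have := leq_imset_card (proposee k) [set~ y1].
rewrite cardsT cardsC1 card_ord => le_img le_n; have := leq_trans le_n le_img.
by have := ltn_ord y1; lia.
Qed.

Section Advance.
Variables (k : 'I_n -> 'I_n) (y1 y2 : 'I_n).
Hypotheses (inv : gs_invariant k) (y12 : y1 != y2)
  (same : proposee k y1 = proposee k y2)
  (rejected : prefers pW (proposee k y1) y2 y1).

Definition advance (y : 'I_n) : 'I_n :=
  if y == y1 then Ordinal (proposal_not_last inv y12 same) else k y.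

Lemma proposee_advance y : y != y1 -> proposee advance y = proposee k y.
Proof. by move=> /negbTE y_y1; rewrite /proposee /advance y_y1. Qed.

Lemma gs_invariant_advance : gs_invariant advance.
Proof.
move=> y x; case: (eqVneq y y1) => [-> | y_y1].
  have -> : (advance y1 : nat) = (k y1).+1 by rewrite /advance eqxx.
  rewrite ltnS leq_eqVlt => /orP[/eqP/val_inj eq_x | lt_x].
    have x_eq : proposee k y1 = x by rewrite /proposee -eq_x permK.
    exists y2; rewrite proposee_advance 1?eq_sym //.
    by split; [rewrite -same | rewrite -x_eq].
  have [y' [held_x prf]] := inv lt_x; exists y'.
  by rewrite proposee_advance //; apply: contraTneq prf => ->; rewrite /prefers ltnn.
have -> : advance y = k y by rewrite /advance (negbTE y_y1).
move=> /inv [y' [held_x prf]].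
case: (eqVneq y' y1) => [eq_y' | y'_y1]; last by exists y'; rewrite proposee_advance.
exists y2; rewrite proposee_advance 1?eq_sym //.
split; first by rewrite -same -held_x eq_y'.
by move: prf rejected; rewrite /prefers -held_x eq_y'; lia.
Qed.

Lemma sum_advance : \sum_y (advance y : nat) = (\sum_y (k y : nat)).+1.
Proof.
rewrite (bigD1 y1) // [in RHS](bigD1 y1) //= /advance eqxx -addSn; congr (_ + _).
by apply: eq_bigr => y /negbTE ->.
Qed.

End Advance.

Lemma sum_proposals_lt (k : 'I_n -> 'I_n) (y1 : 'I_n) : \sum_y (k y : nat) < n * n.
Proof.
rewrite -[n in X in _ < X * _]card_ord -sum_nat_const (bigD1 y1) //.
rewrite [X in _ < X](bigD1 y1) //= -addSn leq_add //.
by apply: leq_sum => y _; apply: ltnW.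
Qed.

Lemma gs_progress k y1 y2 : gs_invariant k -> y1 != y2 ->
  proposee k y1 = proposee k y2 ->
  exists k', gs_invariant k' /\ \sum_y (k' y : nat) = (\sum_y (k y : nat)).+1.
Proof.
move=> inv; wlog rej : y1 y2 / prefers pW (proposee k y1) y2 y1.
  move=> hwlog y12 same.
  case: (ltngtP (pW (proposee k y1) y2) (pW (proposee k y1) y1)) =>
    [rej | rej | /val_inj/perm_inj eq_y].
  - exact: hwlog rej y12 same.
  - by apply: (@hwlog y2 y1); rewrite 1?eq_sym // /prefers -same.
  - by rewrite eq_y eqxx in y12.
move=> y12 same; exists (advance inv y12 same).
by split; [apply: gs_invariant_advance | apply: sum_advance].
Qed.

Lemma gs_terminates N k : gs_invariant k -> n * n - \sum_y (k y : nat) <= N ->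
  exists mu, stable pW pM mu.
Proof.
elim: N k => [|N IH] k inv bound.
all: case: (boolP (injectiveb (proposee k))) =>
  [/injectiveP | /injectivePn [y1 [y2 y12 same]]];
  first exact: stable_of_injective_proposee inv.
all: have [k' [inv' sum']] := gs_progress inv y12 same.
all: have := sum_proposals_lt k' y1.
  by lia.
by move=> lt_sum; apply: (IH k' inv'); lia.
Qed.

End GaleShapley.

Lemma stable_exists n (pW pM : profile n) : exists mu, stable pW pM mu.
Proof.
case: n pW pM => [|n] pW pM.
  by exists 1%g; apply/forallP => -[].
apply: (@gs_terminates _ pW pM (n.+1 * n.+1) (fun _ => ord0)) => [y x|].
  by rewrite ltn0.
exact: leq_subr.
Qed.

Section ScorePreference.
Variables (n : nat) (score : 'I_n -> nat).

Definition score_key (y : 'I_n) : nat := score y * n + y.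
Definition score_rank (y : 'I_n) : nat := #|[set y' | score_key y' < score_key y]|.

Lemma score_key_inj : injective score_key.
Proof.
move=> y1 y2 /(congr1 (modn^~ n)); rewrite !modnMDl !modn_small //; exact: val_inj.
Qed.

Lemma score_key_lt y1 y2 : score y1 < score y2 -> score_key y1 < score_key y2.
Proof.
move=> lt_s; have : (score y1).+1 * n <= score y2 * n by rewrite leq_mul2r lt_s orbT.
by rewrite /score_key mulSn; have := ltn_ord y1; lia.
Qed.

Lemma score_rank_lt_n y : score_rank y < n.
Proof.
rewrite -[n in _ < n]card_ord -cardsT; apply: proper_card; apply/properP.
by split; [exact: subsetT | exists y; rewrite ?inE ?ltnn].
Qed.

Lemma score_rank_mono y1 y2 : score_key y1 < score_key y2 -> score_rank y1 < score_rank y2.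
Proof.
move=> lt12; apply: proper_card; apply/properP; split.
  by apply/subsetP => z; rewrite !inE => /ltn_trans; apply.
by exists y1; rewrite !inE ?ltnn.
Qed.

Lemma score_rank_inj : injective (fun y => Ordinal (score_rank_lt_n y)).
Proof.
move=> y1 y2 /(congr1 val) /= eq_rank.
case: (ltngtP (score_key y1) (score_key y2)) => [| | /score_key_inj //];
  by move=> /score_rank_mono; rewrite eq_rank ltnn.
Qed.

Definition score_perm : {perm 'I_n} := perm score_rank_inj.

End ScorePreference.

(* Ties in [F a] are broken by index, so any score function gives a profile. *)
Definition score_profile n (F : 'I_n -> 'I_n -> nat) : profile n :=
  [ffun a => score_perm (F a)].

Lemma prefers_score n (F : 'I_n -> 'I_n -> nat) a b1 b2 :
  F a b1 < F a b2 -> prefers (score_profile F) a b1 b2.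
Proof.
by move=> /score_key_lt lt_key; rewrite /prefers ffunE !permE; apply: score_rank_mono.
Qed.

Lemma perm_inv_of_val n (s : {perm 'I_n}) (x y : 'I_n) :
  nat_of_ord (s x) = y -> (s^-1)%g y = x.
Proof. by move=> /val_inj <-; rewrite permK. Qed.

Lemma perm_inv_val_neq n (s : {perm 'I_n}) (x y : 'I_n) :
  nat_of_ord (s x) != y -> nat_of_ord ((s^-1)%g y) != x.
Proof. by apply: contraNneq => /val_inj <-; rewrite permKV. Qed.

Section Relabel.
Variables (n : nat) (phi psi : {perm 'I_n}).

Definition relabelW (pW : profile n) : profile n :=
  [ffun x => (psi^-1 * pW (phi^-1 x))%g].
Definition relabelM (pM : profile n) : profile n :=
  [ffun y => (phi^-1 * pM (psi^-1 y))%g].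
Definition relabel_marriage (mu : marriage n) : marriage n := (phi^-1 * mu * psi)%g.

Lemma blocking_relabel pW pM mu x y :
  blocking (relabelW pW) (relabelM pM) (relabel_marriage mu) x y =
  blocking pW pM mu (phi^-1 x)%g (psi^-1 y)%g.
Proof.
by rewrite /blocking /prefers !ffunE /relabel_marriage !invMg !permM !permK invgK permK.
Qed.

Lemma stable_relabel pW pM mu :
  stable (relabelW pW) (relabelM pM) (relabel_marriage mu) = stable pW pM mu.
Proof.
apply/forallP/forallP => stab x; apply/forallP => y.
  by have := forallP (stab (phi x)) (psi y); rewrite blocking_relabel !permK.
by rewrite blocking_relabel (forallP (stab _)).
Qed.

Lemma relabel_marriageKV : cancel (fun mu => phi * mu * psi^-1)%g relabel_marriage.
Proof. by move=> mu; rewrite /relabel_marriage !mulgA mulVg mul1g -mulgA mulVg mulg1. Qed.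

Lemma relabel_marriageE mu x : relabel_marriage mu (phi x) = psi (mu x).
Proof. by rewrite /relabel_marriage !permM permK. Qed.

Lemma married_some_relabel w m pW pM :
  married_some (phi w) (psi m) (relabelW pW) (relabelM pM) = married_some w m pW pM.
Proof.
apply/existsP/existsP => -[mu /andP[stab mu_w]].
  exists (phi * mu * psi^-1)%g; rewrite -stable_relabel relabel_marriageKV stab /=.
  by rewrite -(inj_eq (@perm_inj _ psi)) -relabel_marriageE relabel_marriageKV.
exists (relabel_marriage mu); rewrite stable_relabel stab /=.
by rewrite relabel_marriageE (eqP mu_w).
Qed.

Lemma married_every_relabel w m pW pM :
  married_every (phi w) (psi m) (relabelW pW) (relabelM pM) = married_every w m pW pM.
Proof.
apply/forallP/forallP => every mu; apply/implyP => stab.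
  have := implyP (every (relabel_marriage mu)); rewrite stable_relabel.
  by rewrite relabel_marriageE (inj_eq perm_inj); apply.
rewrite -(relabel_marriageKV mu) stable_relabel in stab.
by rewrite -(relabel_marriageKV mu) relabel_marriageE (inj_eq perm_inj) (implyP (every _)).
Qed.

End Relabel.

(* The gadget for [n = p + q + 2]; a lower score means more preferred.
   Women: [0], [1], row women [2 + i] ([i < p]), column women [p + 2 + j]
   ([j < q]); men: [0], [1], column men [2 + j], row men [q + 2 + i].
   Row woman [2 + i] ranks first the column men [2 + j] with [S i j], then
   row man [q + 2 + i]; column man [2 + j] ranks first the row women [2 + i]
   with [T i j], then column woman [p + 2 + j], who ranks him first.  If [S]
   and [T] are disjoint, every column woman gets her column man and woman [0]
   gets man [0]; otherwise some column woman falls back on man [0], leaving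
   woman [0] with man [1]. *)
Definition gadget_scoreW p q (S : nat -> nat -> bool) (x y : nat) : nat :=
  if x == 0 then (if y == 0 then 0 else if y == 1 then 1 else 2)
  else if x == 1 then 0
  else if x < p.+2 then
    (if [&& 2 <= y, y < q.+2 & S (x - 2) (y - 2)] then 0
     else if y == q.+2 + (x - 2) then 1 else 2)
  else (if y == x - p then 0 else if y == 0 then 1 else 2).

Definition gadget_scoreM p q (T : nat -> nat -> bool) (y x : nat) : nat :=
  if y == 0 then (if p.+2 <= x then 0 else if x == 0 then 1 else 2)
  else if y == 1 then (if x == 0 then 0 else 1)
  else if y < q.+2 then
    (if [&& 2 <= x, x < p.+2 & T (x - 2) (y - 2)] then 0
     else if x == y + p then 1 else 2)
  else (if x == y - q then 0 else 1).

Definition gadgetW n p q S : profile n :=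
  score_profile (fun x y : 'I_n => gadget_scoreW p q S x y).
Definition gadgetM n p q T : profile n :=
  score_profile (fun y x : 'I_n => gadget_scoreM p q T y x).

Ltac case_scores :=
  rewrite ?/gadget_scoreW ?/gadget_scoreM /= ?subSS ?subn0;
  repeat (case: ifP => ?); try lia.

Section GadgetStable.
Variables (n p q : nat) (S T : nat -> nat -> bool).
Hypothesis n_eq : n = p + q + 2.
Variable mu : marriage n.
Hypothesis stab : stable (gadgetW n p q S) (gadgetM n p q T) mu.

Local Notation sW := (gadget_scoreW p q S).
Local Notation sM := (gadget_scoreM p q T).

Lemma gadget_no_blocking (x y : 'I_n) :
  sW x y < sW x (mu x) -> sM y ((mu^-1)%g y) <= sM y x.
Proof.
move=> x_prefers; rewrite leqNgt; apply: contraNN (forallP (forallP stab x) y) => y_prefers.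
by rewrite /blocking (prefers_score x_prefers) (prefers_score y_prefers).
Qed.

Lemma gadget_column_matched :
  (forall i j, ~~ (S i j && T i j)) ->
  forall x : 'I_n, p.+2 <= x -> nat_of_ord (mu x) = x - p.
Proof.
move=> disj x col_x; apply/eqP/negPn/negP => mu_x.
have xn := ltn_ord x.
have bn : x - p < n by lia.
pose b := Ordinal bn; set x' := (mu^-1)%g b.
have mu_x' : mu x' = b by rewrite permKV.
have x'_x : nat_of_ord x' != x by apply: perm_inv_val_neq.
have b_first : sW x b < sW x (mu x) by move: mu_x; case_scores.
have := gadget_no_blocking b_first; rewrite -/x' => b_likes_x'.
have /and3P[x'_gt1 x'_lt HT] : [&& 1 < x', x' < p.+2 & T (x' - 2) (x - p - 2)].
  by move: b_likes_x' x'_x; case_scores.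
have HS : ~~ S (x' - 2) (x - p - 2).
  by have := disj (x' - 2) (x - p - 2); rewrite HT andbT.
have cn : q.+2 + (x' - 2) < n by lia.
pose c := Ordinal cn.
have wife_c : nat_of_ord ((mu^-1)%g c) != x'.
  by apply: perm_inv_val_neq; rewrite mu_x' /=; lia.
have c_better : sW x' c < sW x' (mu x') by move: HS; rewrite mu_x'; case_scores.
by move: (gadget_no_blocking c_better) wife_c; case_scores.
Qed.

Lemma gadget_column_unmatched i j : i < p -> j < q -> S i j -> T i j ->
  exists2 x : 'I_n, p.+2 <= x & nat_of_ord (mu x) != x - p.
Proof.
move=> ip jq HS HT; apply/exists_inP; apply: contraLR isT => /exists_inPn unmatched.
have col_matched (x : 'I_n) : p.+2 <= x -> nat_of_ord (mu x) = x - p.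
  by move=> /unmatched /negPn /eqP.
have an : i.+2 < n by lia.
have bn : j.+2 < n by lia.
have dn : p.+2 + j < n by lia.
pose a := Ordinal an; pose b := Ordinal bn; pose d := Ordinal dn.
have wife_b : (mu^-1)%g b = d.
  by apply: perm_inv_of_val; rewrite (col_matched d) /=; lia.
have mu_a : ~~ (2 <= mu a < q.+2).
  apply/negP => /andP[ge2 ltq].
  have d'n : p.+2 + (mu a - 2) < n by lia.
  have : mu (Ordinal d'n) = mu a.
    by apply: val_inj; rewrite /= col_matched /=; lia.
  by move=> /perm_inj /(congr1 val) /=; lia.
have b_better : sW a b < sW a (mu a) by move: mu_a HS; case_scores.
by move: (gadget_no_blocking b_better) mu_a HS HT; rewrite wife_b; case_scores.
Qed.

Lemma gadget_w0_first (w0 m0 : 'I_n) : nat_of_ord w0 = 0 -> nat_of_ord m0 = 0 ->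
  (forall x : 'I_n, p.+2 <= x -> nat_of_ord (mu x) = x - p) -> nat_of_ord (mu w0) = 0.
Proof.
move=> w0_eq m0_eq col_matched; apply/eqP/negPn/negP => mu_w0.
have := @perm_inv_val_neq n mu w0 m0; rewrite w0_eq m0_eq => /(_ mu_w0) wife_m0.
have wife_row : (mu^-1)%g m0 < p.+2.
  rewrite ltnNge; apply/negP => col.
  by have := col_matched _ col; rewrite permKV m0_eq; lia.
have m0_best : sW w0 m0 < sW w0 (mu w0).
  by move: mu_w0; rewrite w0_eq m0_eq; case_scores.
by move: (gadget_no_blocking m0_best) wife_m0 wife_row; rewrite w0_eq m0_eq; case_scores.
Qed.

Lemma gadget_w0_second (w0 m0 m1 x0 : 'I_n) :
  nat_of_ord w0 = 0 -> nat_of_ord m0 = 0 -> nat_of_ord m1 = 1 ->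
  p.+2 <= x0 -> nat_of_ord (mu x0) != x0 - p -> nat_of_ord (mu w0) = 1.
Proof.
move=> w0_eq m0_eq m1_eq col_x0 mu_x0.
have wife_col : p.+2 <= (mu^-1)%g m0.
  rewrite leqNgt; apply/negP => wife_row.
  have mu_x0_m0 : nat_of_ord (mu x0) != 0.
    apply: contraTneq wife_row => mu_x0_0.
    by rewrite (perm_inv_of_val (s := mu) (x := x0)) -?leqNgt // m0_eq.
  have m0_better : sW x0 m0 < sW x0 (mu x0).
    by move: mu_x0 mu_x0_m0; rewrite m0_eq; case_scores.
  by move: (gadget_no_blocking m0_better) wife_row; rewrite m0_eq; case_scores.
have mu_w0_0 : nat_of_ord (mu w0) != 0.
  apply: contraTneq wife_col => mu_w0_0.
  by rewrite (perm_inv_of_val (s := mu) (x := w0)) ?w0_eq ?m0_eq.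
apply/eqP/negPn/negP => mu_w0_1.
have := @perm_inv_val_neq n mu w0 m1; rewrite w0_eq m1_eq => /(_ mu_w0_1) wife_m1.
have m1_better : sW w0 m1 < sW w0 (mu w0).
  by move: mu_w0_0 mu_w0_1; rewrite w0_eq m1_eq; case_scores.
by move: (gadget_no_blocking m1_better) wife_m1; rewrite w0_eq m1_eq; case_scores.
Qed.

End GadgetStable.

Section SubsetGadget.
Variables (p q : nat).

Definition rel_of_set (F : {set 'I_p * 'I_q}) (i j : nat) : bool :=
  [exists c in F, (c.1 == i :> nat) && (c.2 == j :> nat)].

Lemma rel_of_set_disjoint (F G : {set 'I_p * 'I_q}) : F \subset G ->
  forall i j, ~~ (rel_of_set F i j && rel_of_set (~: G) i j).
Proof.
move=> /subsetP sFG i j; apply/negP => /andP[].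
move=> /exists_inP[[a b] Fab /andP[/eqP ai /eqP bj]].
move=> /exists_inP[[a' b'] + /andP[/eqP a'i /eqP b'j]].
have [-> ->] : a' = a /\ b' = b by split; apply: val_inj; rewrite /= ?ai ?a'i ?bj ?b'j.
by rewrite inE sFG.
Qed.

Lemma rel_of_set_meet (F G : {set 'I_p * 'I_q}) : ~~ (F \subset G) ->
  exists i j, [/\ i < p, j < q, rel_of_set F i j & rel_of_set (~: G) i j].
Proof.
case/subsetPn => c Fc Gc; exists c.1, c.2; split; rewrite ?ltn_ord //.
  by apply/exists_inP; exists c; rewrite ?eqxx.
by apply/exists_inP; exists c; rewrite ?inE ?eqxx.
Qed.

Definition subset_gadgetW n (F : {set 'I_p * 'I_q}) : profile n :=
  gadgetW n p q (rel_of_set F).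
Definition subset_gadgetM n (G : {set 'I_p * 'I_q}) : profile n :=
  gadgetM n p q (rel_of_set (~: G)).

Lemma subset_gadget_w0 n F G mu (w0 : 'I_n) :
  n = p + q + 2 -> nat_of_ord w0 = 0 ->
  stable (subset_gadgetW n F) (subset_gadgetM n G) mu ->
  nat_of_ord (mu w0) = if F \subset G then 0 else 1.
Proof.
move=> n_eq w0_eq stab.
have n0 : 0 < n by lia.
have n1 : 1 < n by lia.
case: ifP => [sub | /negbT nsub].
  apply: (gadget_w0_first n_eq stab (m0 := Ordinal n0)) => //.
  exact: (gadget_column_matched n_eq stab (rel_of_set_disjoint sub)).
have [i [j [ip jq HS HT]]] := rel_of_set_meet nsub.
have [x0 col_x0 unmatched] := gadget_column_unmatched n_eq stab ip jq HS HT.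
exact: (gadget_w0_second n_eq stab (m0 := Ordinal n0) (m1 := Ordinal n1) w0_eq _ _ col_x0).
Qed.

End SubsetGadget.

Lemma married_some_forced n (pW pM : profile n) (w m : 'I_n) k :
  (forall mu, stable pW pM mu -> nat_of_ord (mu w) = k) ->
  married_some w m pW pM = (nat_of_ord m == k).
Proof.
move=> forced; have [mu0 stab0] := stable_exists pW pM.
apply/existsP/idP => [[mu /andP[stab /eqP <-]] | /eqP m_k]; first by rewrite forced.
by exists mu0; rewrite stab0 -val_eqE /= forced // m_k.
Qed.

Lemma married_every_forced n (pW pM : profile n) (w m : 'I_n) k :
  (forall mu, stable pW pM mu -> nat_of_ord (mu w) = k) ->
  married_every w m pW pM = (nat_of_ord m == k).
Proof.
move=> forced; have [mu0 stab0] := stable_exists pW pM.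
apply/forallP/idP => [every | /eqP m_k mu].
  by have /eqP <- := implyP (every mu0) stab0; rewrite forced.
by apply/implyP => stab; rewrite -val_eqE /= forced // m_k.
Qed.

Lemma square_le_16_split n : 6 <= n ->
  exists p q, n = p + q + 2 /\ n ^ 2 <= 16 * (p * q).
Proof.
move=> n_ge6; exists ((n - 2) %/ 2), (n - 2 - (n - 2) %/ 2).
have := divn_eq (n - 2) 2; have : (n - 2) %% 2 < 2 by rewrite ltn_pmod.
set p := (n - 2) %/ 2 => mod_lt n_div; split; first by lia.
rewrite expnS expn1 -[16]/(4 * 4) mulnACA.
by apply: leq_mul; lia.
Qed.

Section Instance.
Variables (n p q : nat) (w m w0 m0 : 'I_n).
Hypotheses (n_eq : n = p + q + 2) (w0_eq : nat_of_ord w0 = 0).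

Definition instanceW (F : {set 'I_p * 'I_q}) : profile n :=
  relabelW (tperm w0 w) (tperm m0 m) (subset_gadgetW n F).
Definition instanceM (G : {set 'I_p * 'I_q}) : profile n :=
  relabelM (tperm w0 w) (tperm m0 m) (subset_gadgetM n G).

Lemma married_some_instance F G : married_some w m (instanceW F) (instanceM G) =
  (nat_of_ord m0 == if F \subset G then 0 else 1).
Proof.
rewrite -{1}(tpermL w0 w) -{1}(tpermL m0 m) married_some_relabel.
by apply: married_some_forced => mu; apply: subset_gadget_w0.
Qed.

Lemma married_every_instance F G : married_every w m (instanceW F) (instanceM G) =
  (nat_of_ord m0 == if F \subset G then 0 else 1).
Proof.
rewrite -{1}(tpermL w0 w) -{1}(tpermL m0 m) married_every_relabel.
by apply: married_every_forced => mu; apply: subset_gadget_w0.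
Qed.

End Instance.

Theorem theorem27 :
  exists (c N0 : nat), (0 < c)%N /\
    forall (n : nat), (N0 <= n)%N -> forall (w m : 'I_n),
      ncc_scaled_ge (@married_some n w m) c (n ^ 2) /\
      concc_scaled_ge (@married_some n w m) c (n ^ 2) /\
      ncc_scaled_ge (@married_every n w m) c (n ^ 2) /\
      concc_scaled_ge (@married_every n w m) c (n ^ 2).
Proof.
exists 16, 6; split => // n n_ge6 w m.
have [p [q [n_eq sq_le]]] := square_le_16_split n_ge6.
have n0 : 0 < n by lia.
have n1 : 1 < n by lia.
pose w0 := Ordinal n0.
have cost m0 f :
    (forall F G : {set 'I_p * 'I_q},
       f (instanceW w m w0 m0 F) (instanceM w m w0 m0 G) = (F \subset G)) ->
    ncc_scaled_ge f 16 (n ^ 2).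
  move=> fE b /(nd_cost_subset fE); rewrite card_prod !card_ord => pq_le.
  exact: leq_trans sq_le (leq_mul (leqnn 16) pq_le).
split; [|split; [|split]];
  [apply: (cost (Ordinal n0)) | apply: (cost (Ordinal n1)) |
   apply: (cost (Ordinal n0)) | apply: (cost (Ordinal n1))].
all: move=> F G; rewrite ?married_some_instance ?married_every_instance //.
all: by case: (F \subset G).
Qed.
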